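(* Let $G$ be a graph on $n$ vertices which is neither the empty (edgeless) graph nor the complete graph. Then \[\operatorname{scp}(G)+\operatorname{scp}(\overline{G})\ \ge\ 3n-3,\] and equality holds if and only if $G$ or $\overline{G}$ contains a clique of size $n-1$.
   Context: A clique partition of a graph $G$ is a family $\mathcal{C}$ of cliques (sets of pairwise adjacent vertices) of $G$ such that every edge of $G$ has both endpoints in exactly one member of $\mathcal{C}$. The sigma clique partition number $\operatorname{scp}(G)$ is the minimum of $\sum_{C\in\mathcal{C}}|C|$ over all clique partitions $\mathcal{C}$ of $G$. $\overline{G}$ denotes the complement of $G$. *)

From mathcomp Require Import all_boot all_order.
Set Implicit Arguments. Unset Strict Implicit. Unset Printing Implicit Defensive.

Definition simple_graph (T : finType) (e : rel T) : Prop :=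
  symmetric e /\ irreflexive e.

Definition gcompl (T : finType) (e : rel T) : rel T :=
  fun x y => (x != y) && ~~ e x y.

Definition is_clique (T : finType) (e : rel T) (C : {set T}) : bool :=
  [forall x in C, forall y in C, (x != y) ==> e x y].

Definition clique_partition (T : finType) (e : rel T) (P : {set {set T}}) : bool :=
  [forall C in P, is_clique e C] &&
  [forall x, forall y, e x y ==> (#|[set C in P | (x \in C) && (y \in C)]| == 1)].

Definition cp_weight (T : finType) (P : {set {set T}}) : nat := \sum_(C in P) #|C|.

(* The trivial clique partition into edges (used only as the start value of
   the minimum; it is a clique partition of every simple graph). *)
Definition edge_family (T : finType) (e : rel T) : {set {set T}} :=
  [set [set p.1; p.2] | p in [set p : T * T | e p.1 p.2]].

Definition scp (T : finType) (e : rel T) : nat :=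
  \big[minn/cp_weight (edge_family e)]_(P : {set {set T}} | clique_partition e P)
     cp_weight P.

Definition has_clique_of_size (T : finType) (e : rel T) (k : nat) : Prop :=
  exists C : {set T}, is_clique e C && (#|C| == k).

(* Take optimal clique partitions P of G and Q of its complement. Every pair of
   distinct vertices lies in exactly one block of P ∪ Q, so P ∪ Q is a clique
   partition of the complete graph K_n, of weight at most scp(G) + scp(co-G);
   its blocks are proper subsets because G and its complement both have edges.
   By double counting, the weight of such a family is the sum over vertices x
   of the number r(x) of blocks through x. Fix a largest block B. A vertex
   outside B lies in at least |B| blocks (those joining it to the points of B
   are distinct) and a vertex of B in at least two, which gives 3n - 3 when
   |B| = n - 1. Otherwise the weight exceeds 3n - 3: if all blocks are pairs
   then r(x) = n - 1 for all x and n >= 4; if |B| >= 3, two points y, z outside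
   B span a block meeting B in at most one point, and every other point of B
   lies in at least three blocks.
   Conversely, a clique V \ {v} of size n - 1 in G or in its complement yields
   the near pencil {V \ {v}} ∪ {{v, u} : u <> v}, a clique partition of K_n of
   weight 3(n - 1) whose blocks are cliques of G or of its complement; it
   splits into clique partitions of G and of co-G. *)

From HB Require Import structures.
From mathcomp Require Import all_boot all_order.
From mathcomp Require Import zify.
Set Implicit Arguments. Unset Strict Implicit. Unset Printing Implicit Defensive.

Lemma cards3 (T : finType) (a b c : T) :
  a != b -> a != c -> b != c -> #|[set a; b; c]| = 3.
Proof.
move=> ab ac bc.
by rewrite -setUA !cardsU1 cards1 !inE (negbTE ab) (negbTE ac) (negbTE bc).
Qed.

Lemma card_eq_setC1 (T : finType) (C : {set T}) :
  0 < #|T| -> #|C| = #|T|.-1 -> exists v, C = [set~ v].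
Proof.
move=> n0 Cn; have /cards1P[v Cv] : #|~: C| == 1 by move: (cardsC C); rewrite Cn; lia.
by exists v; rewrite -Cv setCK.
Qed.

Section CliquePartitions.
Variables (T : finType) (R : rel T).
Implicit Types (C D : {set T}) (P : {set {set T}}).

Lemma is_cliqueP C : reflect {in C &, forall x y, x != y -> R x y} (is_clique R C).
Proof.
apply: (iffP forall_inP) => [cl x y xC yC | cl x xC].
  by move/forall_inP/(_ y yC)/implyP: (cl x xC).
by apply/forall_inP => y yC; apply/implyP; apply: cl.
Qed.

Lemma pair_clique x y : symmetric R -> R x y -> is_clique R [set x; y].
Proof.
move=> Rsym Rxy; apply/is_cliqueP => u w.
by rewrite !inE => /orP[]/eqP-> /orP[]/eqP->; rewrite ?eqxx // Rsym.
Qed.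

Lemma clique_card_lt C x y :
  is_clique R C -> x != y -> ~~ R x y -> #|C| < #|T|.
Proof.
move=> /is_cliqueP Ccl xy nRxy; rewrite ltnNge; apply: contra nRxy => Cn.
have CT : C = setT by apply/eqP; rewrite eqEcard subsetT cardsT Cn.
by apply: Ccl; rewrite // CT inE.
Qed.

Lemma clique_partitionP P :
  reflect [/\ {in P, forall C, is_clique R C},
              forall x y, R x y -> exists2 C, C \in P & (x \in C) && (y \in C)
            & forall x y, R x y -> {in P &, forall C D,
                x \in C -> y \in C -> x \in D -> y \in D -> C = D}]
          (clique_partition R P).
Proof.
apply: (iffP andP) => [[/forall_inP Pcl /forallP Pone] | [Pcl Pex Puniq]].
  have blocks1 x y : R x y ->
      exists D, [set C in P | (x \in C) && (y \in C)] = [set D].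
    by move=> Rxy; apply/cards1P; move/forallP/(_ y)/implyP: (Pone x); apply.
  split=> // [x y /blocks1 [D blocksE] | x y /blocks1 [D blocksE] C1 C2 C1P C2P].
    by exists D; move: (set11 D); rewrite -blocksE inE => /andP[].
  have toD C : C \in P -> x \in C -> y \in C -> C = D.
    by move=> CP xC yC; apply/set1P; rewrite -blocksE inE CP xC.
  by move=> xC1 yC1 xC2 yC2; rewrite (toD C1) // (toD C2).
split; first exact/forall_inP.
apply/forallP => x; apply/forallP => y; apply/implyP => Rxy.
have [D DP /andP[xD yD]] := Pex x y Rxy.
apply/cards1P; exists D; apply/setP => C; rewrite !inE.
apply/andP/eqP => [[CP /andP[xC yC]] | ->]; last by rewrite DP xD yD.
exact: Puniq Rxy _ _ CP DP xC yC xD yD.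
Qed.

End CliquePartitions.

(* Lets the semigroup lemmas on big operators (e.g. [bigD1]) apply to the
   minimum defining [scp], whose start value is not a unit for [minn]. *)
HB.instance Definition _ := SemiGroup.isComLaw.Build nat minn minnA minnC.

Section SigmaCliquePartitionNumber.
Variables (T : finType) (e : rel T).
Hypothesis e_simple : simple_graph e.

Lemma gcompl_simple : simple_graph (gcompl e).
Proof.
have [esym eirr] := e_simple.
by split=> [x y|x]; rewrite /gcompl ?eqxx // eq_sym esym.
Qed.

Lemma edge_family_cp : clique_partition e (edge_family e).
Proof.
have [esym eirr] := e_simple.
apply/clique_partitionP; split.
- by move=> C /imsetP[p]; rewrite inE => ep ->; apply: pair_clique.
- move=> x y exy; exists [set x; y]; last by rewrite !inE !eqxx orbT.
  by apply/imsetP; exists (x, y); rewrite ?inE.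
- move=> x y exy C D /imsetP[p _ ->] /imsetP[q _ ->].
  have xy : x != y by apply: contraTneq exy => ->; rewrite eirr.
  have pairE (a b : T) : x \in [set a; b] -> y \in [set a; b] -> [set a; b] = [set x; y].
    move=> xab yab; apply/eqP; rewrite eq_sym eqEcard !cards2 xy ltnS leq_b1 andbT.
    by apply/subsetP => w /set2P[]->.
  by move=> xp yp xq yq; rewrite (pairE _ _ xp yp) (pairE _ _ xq yq).
Qed.

Lemma scp_le P : clique_partition e P -> scp e <= cp_weight P.
Proof. by move=> eP; rewrite /scp (bigD1 P) //= geq_minl. Qed.

Lemma scp_attained : exists2 P, clique_partition e P & scp e = cp_weight P.
Proof.
rewrite /scp; elim/big_ind: _ => [|m n [P eP ->] [Q eQ ->]|P eP]; last by exists P.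
- by exists (edge_family e); first exact: edge_family_cp.
- by rewrite /minn; case: ltnP => _; [exists P | exists Q].
Qed.

End SigmaCliquePartitionNumber.

Definition complete_rel (T : finType) : rel T := fun x y => x != y.
Arguments complete_rel {T} x y /.

Lemma complete_clique (T : finType) (C : {set T}) : is_clique complete_rel C.
Proof. exact/is_cliqueP. Qed.

Lemma cp_weight_setU (T : finType) (P Q : {set {set T}}) :
  cp_weight (P :|: Q) <= cp_weight P + cp_weight Q.
Proof.
rewrite /cp_weight (big_setID P) setUK setDUl setDv set0U leq_add //.
by rewrite [leqRHS](big_setID P) leq_addl.
Qed.

Section NearPencil.
Variables (T : finType) (v : T).

Definition near_pencil : {set {set T}} := [set~ v] |: [set [set v; u] | u in [set~ v]].

Lemma near_pencil_cp : clique_partition complete_rel near_pencil.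
Proof.
apply/clique_partitionP; split=> [C _|x y /= xy|x y /= xy C D]; first exact: complete_clique.
  have pencil_pair u : u != v -> [set v; u] \in near_pencil.
    by move=> uv; apply/setU1P; right; apply/imsetP; exists u; rewrite // !inE.
  case: (eqVneq x v) xy => [->|xv] xy.
    by exists [set v; y]; [rewrite pencil_pair // eq_sym | rewrite !inE !eqxx orbT].
  case: (eqVneq y v) xy => [->|yv] xy.
    by exists [set v; x]; [rewrite pencil_pair | rewrite !inE !eqxx orbT].
  by exists [set~ v]; rewrite ?setU11 // !inE xv yv.
have blockE A : A \in near_pencil -> x \in A -> y \in A ->
    A = if x == v then [set v; y] else if y == v then [set v; x] else [set~ v].
  case/setU1P => [->|/imsetP[u]]; first by rewrite !inE => /negbTE-> /negbTE->.
  rewrite !inE => uv -> xA yA; move: xy.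
  by case/set2P: xA => ->; case/set2P: yA => ->; rewrite ?eqxx ?(negbTE uv).
by move=> CP DP xC yC xD yD; rewrite (blockE C) // (blockE D).
Qed.

Lemma near_pencil_weight : cp_weight near_pencil = 3 * #|T|.-1.
Proof.
have vNpair u : [set~ v] != [set v; u] by apply/negP => /eqP/setP/(_ v); rewrite !inE eqxx.
rewrite /cp_weight big_setU1 /=; last first.
  by apply/imsetP => -[u _ /eqP]; rewrite (negbTE (vNpair u)).
rewrite big_imset /= => [|u w uv _ eq_uw]; last first.
  have : u \in [set v; w] by rewrite -eq_uw set22.
  by case/set2P=> // uE; move: uv; rewrite uE !inE eqxx.
rewrite (eq_bigr (fun=> 2)) => [|u]; last by rewrite !inE cards2 eq_sym => ->.
by rewrite sum_nat_const cardsC1 mulnC -mulSn.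
Qed.

Lemma near_pencil_cliques (e : rel T) : symmetric e ->
    is_clique e [set~ v] || is_clique (gcompl e) [set~ v] ->
  {in near_pencil, forall C, is_clique e C || is_clique (gcompl e) C}.
Proof.
move=> esym vCcl C /setU1P[-> //|/imsetP[u]].
rewrite !inE => uv ->; case evu: (e v u); first by rewrite pair_clique.
have gsym : symmetric (gcompl e) by move=> x y; rewrite /gcompl eq_sym esym.
by apply/orP; right; apply: pair_clique; rewrite // /gcompl eq_sym uv evu.
Qed.

End NearPencil.

Section GraphAndComplement.
Variables (T : finType) (e : rel T).
Implicit Types (C D : {set T}) (P Q F : {set {set T}}).

Lemma clique_gcompl_meet C D x y : is_clique e C -> is_clique (gcompl e) D ->
  x \in C -> y \in C -> x \in D -> y \in D -> x = y.
Proof.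
move=> /is_cliqueP eC /is_cliqueP gD xC yC xD yD; apply/eqP/negP => /negP xy.
by move: (gD x y xD yD xy); rewrite /gcompl xy eC.
Qed.

Lemma cp_complete_setU P Q : clique_partition e P -> clique_partition (gcompl e) Q ->
  clique_partition complete_rel (P :|: Q).
Proof.
move=> /clique_partitionP[Pcl Pex Puniq] /clique_partitionP[Qcl Qex Quniq].
apply/clique_partitionP; split=> [C _|x y /= xy|x y /= xy C D]; first exact: complete_clique.
  case exy: (e x y); first by have [C CP xyC] := Pex x y exy; exists C; rewrite ?inE ?CP.
  have gxy : gcompl e x y by rewrite /gcompl xy exy.
  by have [C CQ xyC] := Qex x y gxy; exists C; rewrite ?inE ?CQ ?orbT.
have edge (R : rel T) A : is_clique R A -> x \in A -> y \in A -> R x y.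
  by move=> /is_cliqueP RA xA yA; apply: RA.
have disj A B : A \in P -> B \in Q -> x \in A -> y \in A -> x \in B -> y \in B -> C = D.
  move=> AP BQ xA yA xB yB; move: xy.
  by rewrite (clique_gcompl_meet (Pcl _ AP) (Qcl _ BQ) xA yA xB yB) eqxx.
case/setUP=> [CP|CQ] /setUP[DP|DQ] xC yC xD yD.
- exact: Puniq (edge _ _ (Pcl _ CP) xC yC) _ _ CP DP xC yC xD yD.
- exact: disj CP DQ xC yC xD yD.
- exact: disj DP CQ xD yD xC yC.
- exact: Quniq (edge _ _ (Qcl _ CQ) xC yC) _ _ CQ DQ xC yC xD yD.
Qed.

Hypothesis e_simple : simple_graph e.

Lemma cp_complete_split F : clique_partition complete_rel F ->
    {in F, forall C, is_clique e C || is_clique (gcompl e) C} ->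
  clique_partition e [set C in F | is_clique e C] /\
  clique_partition (gcompl e) [set C in F | ~~ is_clique e C].
Proof.
have [_ eirr] := e_simple.
move=> /clique_partitionP[_ Fex Funiq] Fcl.
have uniq p x y : x != y -> {in [set C in F | p C] &, forall C D,
    x \in C -> y \in C -> x \in D -> y \in D -> C = D}.
  by move=> xy C D; rewrite !inE => /andP[CF _] /andP[DF _]; apply: Funiq.
split; apply/clique_partitionP; split.
- by move=> C; rewrite inE => /andP[].
- move=> x y exy; have xy : x != y by apply: contraTneq exy => ->; rewrite eirr.
  have [C CF /andP[xC yC]] := Fex x y xy; exists C; rewrite ?xC ?yC // inE CF /=.
  case/orP: (Fcl C CF) => // /is_cliqueP/(_ x y xC yC xy).
  by rewrite /gcompl exy andbF.
- by move=> x y exy; apply: uniq; apply: contraTneq exy => ->; rewrite eirr.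
- move=> C; rewrite inE => /andP[CF]; apply: contraNT => gC.
  by move: (Fcl C CF); rewrite (negbTE gC) orbF.
- move=> x y gxy; have /andP[xy nexy] := gxy.
  have [C CF /andP[xC yC]] := Fex x y xy; exists C; rewrite ?xC ?yC // inE CF /=.
  by apply: contraNN nexy => /is_cliqueP; apply.
- by move=> x y /andP[xy _]; apply: uniq.
Qed.

Lemma scp_add_le_cp_weight F : clique_partition complete_rel F ->
    {in F, forall C, is_clique e C || is_clique (gcompl e) C} ->
  scp e + scp (gcompl e) <= cp_weight F.
Proof.
move=> Fcp Fcl; have [eP gQ] := cp_complete_split Fcp Fcl.
rewrite /cp_weight (bigID (is_clique e)) /=.
apply: leq_add; [apply: leq_trans (scp_le eP) _ | apply: leq_trans (scp_le gQ) _];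
  by rewrite /cp_weight; under eq_bigl do rewrite inE.
Qed.

Lemma scp_add_ge_cp_weight a b c d : e a b -> gcompl e c d ->
  exists2 F, clique_partition complete_rel F &
    [/\ {in F, forall C, #|C| < #|T|},
        {in F, forall C, is_clique e C || is_clique (gcompl e) C}
      & cp_weight F <= scp e + scp (gcompl e)].
Proof.
move=> eab /andP[cd necd]; have [_ eirr] := e_simple.
have ab : a != b by apply: contraTneq eab => ->; rewrite eirr.
have [P eP ->] := scp_attained e_simple.
have [Q gQ ->] := scp_attained (gcompl_simple e_simple).
exists (P :|: Q); first exact: cp_complete_setU.
have /clique_partitionP[Pcl _ _] := eP; have /clique_partitionP[Qcl _ _] := gQ.
have PQcl : {in P :|: Q, forall C, is_clique e C || is_clique (gcompl e) C}.
  by move=> C /setUP[/Pcl -> | /Qcl ->]; rewrite ?orbT.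
split=> //; last exact: cp_weight_setU.
move=> C /PQcl/orP[Ccl | Ccl]; first exact: clique_card_lt Ccl cd necd.
by apply: clique_card_lt Ccl ab _; rewrite /gcompl eab andbF.
Qed.

Lemma scp_add_le_clique C : 0 < #|T| ->
    is_clique e C || is_clique (gcompl e) C -> #|C| = #|T|.-1 ->
  scp e + scp (gcompl e) <= 3 * #|T| - 3.
Proof.
move=> n_gt0 Ccl /(card_eq_setC1 n_gt0)[v Cv]; have [esym _] := e_simple.
have -> : 3 * #|T| - 3 = cp_weight (near_pencil v) by rewrite near_pencil_weight; lia.
apply: scp_add_le_cp_weight; first exact: near_pencil_cp.
by apply: near_pencil_cliques; rewrite -?Cv.
Qed.

End GraphAndComplement.

Definition cp_deg (T : finType) (F : {set {set T}}) (x : T) : nat :=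
  #|[set C in F | x \in C]|.

Lemma cp_weight_deg (T : finType) (F : {set {set T}}) :
  cp_weight F = \sum_x cp_deg F x.
Proof.
rewrite /cp_weight /cp_deg; under eq_bigr do rewrite -sum1_card.
rewrite (exchange_big_dep xpredT) //=; apply: eq_bigr => x _.
by rewrite -sum1_card; apply: eq_bigl => C; rewrite inE.
Qed.

Lemma cp_weight_deg_split (T : finType) (F : {set {set T}}) (B : {set T}) :
  cp_weight F = \sum_(x in B) cp_deg F x + \sum_(x | x \notin B) cp_deg F x.
Proof. by rewrite cp_weight_deg (bigID (mem B)). Qed.

Definition cp_line (T : finType) (F : {set {set T}}) (x y : T) : {set T} :=
  odflt set0 [pick C in F | (x \in C) && (y \in C)].

Section CompletePartitions.
Variables (T : finType) (F : {set {set T}}).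
Hypothesis F_cp : clique_partition complete_rel F.
Implicit Types (B C D : {set T}) (x y z : T).

Lemma cp_lineP x y : x != y ->
  [/\ cp_line F x y \in F, x \in cp_line F x y & y \in cp_line F x y].
Proof.
case/clique_partitionP: F_cp => _ Fex _ /Fex[C CF xyC]; rewrite /cp_line.
by case: pickP => /= [D /and3P //|/(_ C)]; rewrite CF xyC.
Qed.

Lemma cp_block_uniq x y C D : x != y -> C \in F -> D \in F ->
  x \in C -> y \in C -> x \in D -> y \in D -> C = D.
Proof. by move=> xy; case/clique_partitionP: F_cp => _ _ /(_ x y xy); apply. Qed.

Lemma cp_blocks_meet C D : C \in F -> D \in F -> C != D -> #|C :&: D| <= 1.
Proof.
move=> CF DF CD; apply/card_le1_eqP => x y; rewrite !inE => /andP[xC xD] /andP[yC yD].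
by apply/eqP; apply: contraNT CD => xy; rewrite (cp_block_uniq xy CF DF).
Qed.

Lemma cp_deg_ge x (S : {set T}) : x \notin S ->
  {in F, forall C, x \in C -> #|C :&: S| <= 1} -> #|S| <= cp_deg F x.
Proof.
move=> xS meet1.
have lineP s : s \in S -> [/\ cp_line F x s \in F, x \in cp_line F x s & s \in cp_line F x s].
  by move=> sS; apply: cp_lineP; apply: contraNneq xS => ->.
rewrite -(@card_in_imset _ _ (cp_line F x) S) => [|s t sS tS eqL].
  apply/subset_leq_card/subsetP => _ /imsetP[s /lineP[LF xL _] ->].
  by rewrite inE LF xL.
have [LF xL sL] := lineP s sS; have [_ _ tL] := lineP t tS.
by move/card_le1_eqP: (meet1 _ LF xL); apply; rewrite inE ?sL ?sS // eqL tL.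
Qed.

Lemma cp_deg_ge_blocks x (Cs : {set {set T}}) :
  {subset Cs <= F} -> {in Cs, forall C, x \in C} -> #|Cs| <= cp_deg F x.
Proof.
move=> CsF xCs; apply/subset_leq_card/subsetP => C CCs.
by rewrite inE CsF ?xCs.
Qed.

Lemma cp_deg_small_blocks : {in F, forall C, #|C| <= 2} -> forall x, #|T|.-1 <= cp_deg F x.
Proof.
move=> small x; rewrite -(cardsC1 x).
apply: cp_deg_ge => [|C CF xC]; first by rewrite !inE eqxx.
by rewrite -setDE; move: (cardsD1 x C) (small C CF); rewrite xC; lia.
Qed.

Section LargeBlock.
Variable B : {set T}.
Hypothesis B_in : B \in F.

Lemma cp_deg_notin x : x \notin B -> #|B| <= cp_deg F x.
Proof.
move=> xB; apply: cp_deg_ge => // C CF xC.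
by apply: cp_blocks_meet => //; apply: contraNneq xB => <-.
Qed.

Lemma cp_deg_in x y : y \notin B -> x \in B -> 2 <= cp_deg F x.
Proof.
move=> yB xB; have xy : x != y by apply: contraNneq yB => <-.
have [LF xL yL] := cp_lineP xy.
have BL : B != cp_line F x y by apply: contraNneq yB => ->.
have := cards2 B (cp_line F x y); rewrite BL => <-.
by apply: cp_deg_ge_blocks => C /set2P[]->.
Qed.

Lemma cp_deg_off_line y z b : y \notin B -> z \notin B -> y != z ->
  b \in B -> b \notin cp_line F y z -> 3 <= cp_deg F b.
Proof.
move=> yB zB yz bB bL.
have [Lyz_F yL zL] := cp_lineP yz.
have by' : b != y by apply: contraNneq yB => <-.
have bz : b != z by apply: contraNneq zB => <-.
have [Ly_F bLy yLy] := cp_lineP by'; have [Lz_F bLz zLz] := cp_lineP bz.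
have BLy : B != cp_line F b y by apply: contraNneq yB => ->.
have BLz : B != cp_line F b z by apply: contraNneq zB => ->.
have LyLz : cp_line F b y != cp_line F b z.
  apply: contraNneq bL => Ly_Lz.
  by rewrite (cp_block_uniq yz Lyz_F Ly_F yL zL yLy) // Ly_Lz.
rewrite -(cards3 BLy BLz LyLz).
by apply: cp_deg_ge_blocks => C; rewrite !inE => /orP[/orP[]|] /eqP->.
Qed.

Lemma sum_cp_deg_notin : #|~: B| * #|B| <= \sum_(x | x \notin B) cp_deg F x.
Proof.
rewrite -sum_nat_const (eq_bigl (fun x => x \notin B)) => [|x]; last by rewrite inE.
by apply: leq_sum => x; apply: cp_deg_notin.
Qed.

Lemma sum_cp_deg_in y : y \notin B -> #|B| * 2 <= \sum_(x in B) cp_deg F x.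
Proof. by move=> yB; rewrite -sum_nat_const; apply: leq_sum => x; apply: cp_deg_in yB. Qed.

Lemma sum_cp_deg_in_off_line y z : y \notin B -> z \notin B -> y != z ->
  3 * #|B| <= (\sum_(x in B) cp_deg F x).+1.
Proof.
move=> yB zB yz; set L := cp_line F y z.
have [LF yL _] := cp_lineP yz.
have meetL : #|B :&: L| <= 1 by apply: cp_blocks_meet => //; apply: contraNneq yB => ->.
(* The one point of B that may lie on L is only guaranteed two blocks. *)
have : \sum_(b in B) 3 <= \sum_(b in B) (cp_deg F b + (b \in L)).
  apply: leq_sum => b bB; case bL: (b \in L).
    by rewrite addn1 ltnS (cp_deg_in yB bB).
  by rewrite addn0 (cp_deg_off_line yB zB yz) ?bL.
rewrite big_split sum_nat_const mulnC /= => le3.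
apply: leq_trans le3 _; rewrite -addn1 leq_add2l.
by rewrite -big_mkcondr sum1dep_card.
Qed.

End LargeBlock.

Lemma cp_weight_small_blocks : {in F, forall C, #|C| <= 2} -> #|T| * #|T|.-1 <= cp_weight F.
Proof.
move=> small; rewrite cp_weight_deg -sum_nat_const.
by apply: leq_sum => x _; apply: cp_deg_small_blocks.
Qed.

Lemma cp_weight_gt_large_block B : B \in F -> {in F, forall C, #|C| <= #|B|} ->
  2 <= #|B| -> 2 <= #|~: B| -> 3 * #|T| - 3 < cp_weight F.
Proof.
move=> BF Bmax B_ge2 out_ge2; have cardBC := cardsC B.
have [B_le2 | B_ge3] := leqP #|B| 2.
  have := cp_weight_small_blocks (fun C CF => leq_trans (Bmax C CF) B_le2).
  have : #|T| * 3 <= #|T| * #|T|.-1 by apply: leq_mul => //; lia.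
  lia.
have [y [z [yB zB yz]]] : exists y z, [/\ y \in ~: B, z \in ~: B & y != z].
  exact/card_gt1P.
rewrite !inE in yB zB.
have inB := sum_cp_deg_in_off_line BF yB zB yz.
have outB := sum_cp_deg_notin BF.
have : #|~: B| * 3 <= #|~: B| * #|B| by apply: leq_mul.
by rewrite (cp_weight_deg_split _ B); lia.
Qed.

Lemma cp_complete_weight : {in F, forall C, #|C| < #|T|} -> 1 < #|T| ->
  3 * #|T| - 3 <= cp_weight F /\
  (cp_weight F <= 3 * #|T| - 3 -> exists2 C, C \in F & #|C| = #|T|.-1).
Proof.
move=> F_proper /card_gt1P[x [y [_ _ xy]]].
have [LF xL yL] := cp_lineP xy.
case: (arg_maxnP (fun C => #|C|) LF) => B BF Bmax.
have B_ge2 : 2 <= #|B|.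
  apply: leq_trans (Bmax _ LF); have := cards2 x y; rewrite xy => <-.
  by apply/subset_leq_card/subsetP => w /set2P[]->.
have cardBC := cardsC B; have B_lt := F_proper B BF.
have [out_le1 | out_ge2] := leqP #|~: B| 1; last first.
  have gt := cp_weight_gt_large_block BF Bmax B_ge2 out_ge2.
  by split=> [|le]; [apply: ltnW | move: gt; rewrite ltnNge le].
have out1 : #|~: B| = 1 by lia.
have /card_gt0P[z] : 0 < #|~: B| by rewrite out1.
rewrite inE => zB.
have inB := sum_cp_deg_in BF zB; have outB := sum_cp_deg_notin BF.
rewrite out1 mul1n in outB.
split; last by exists B => //; lia.
by rewrite (cp_weight_deg_split _ B); lia.
Qed.

End CompletePartitions.

Theorem mainTheorem3 (T : finType) (e : rel T) :
  simple_graph e ->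
  (exists x y, e x y) ->
  (exists x y, gcompl e x y) ->
  3 * #|T| - 3 <= scp e + scp (gcompl e) /\
  (scp e + scp (gcompl e) = 3 * #|T| - 3 <->
     has_clique_of_size e #|T|.-1 \/ has_clique_of_size (gcompl e) #|T|.-1).
Proof.
move=> e_simple [a [b eab]] [c [d gcd]].
have [F Fcp [F_proper Fcl le_scp]] := scp_add_ge_cp_weight e_simple eab gcd.
have n_gt1 : 1 < #|T| by apply/card_gt1P; exists c, d; case/andP: gcd.
have [lower tight] := cp_complete_weight Fcp F_proper n_gt1.
split; first exact: leq_trans lower le_scp.
split=> [sum_eq | C_clique].
  have [C CF Cn] : exists2 C, C \in F & #|C| = #|T|.-1 by apply: tight; rewrite -sum_eq.
  by case/orP: (Fcl C CF) => Ccl; [left | right]; exists C; rewrite Ccl Cn eqxx.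
apply/eqP; rewrite eqn_leq (leq_trans lower le_scp) andbT.
case: C_clique => -[C /andP[Ccl /eqP Cn]];
  by rewrite (scp_add_le_clique e_simple (ltnW n_gt1) _ Cn) // Ccl ?orbT.
Qed.
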